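(* For every extreme point $x$ of $\mathbf{S}$ there exists a non-uniformly stable matching $\mu$ in $G$ with $\chi_\mu=x$.
   Context: Setting: $G=(V,E)$ is a finite simple bipartite graph with $V=V_1\sqcup V_2$, every edge joining a vertex of $V_1$ to a vertex of $V_2$; an edge is identified with the set of its two endpoints. $E$ is partitioned into $E_1,E_2$. For $F\subseteq E$ and $v\in V$, $F(v)$ is the set of edges of $F$ incident to $v$. For every $v\in V$ there is a transitive and complete binary relation $\succsim_v$ on $E(v)\cup\{\emptyset\}$ with $e\succsim_v\emptyset$ and $\emptyset\not\succsim_v e$ for all $e\in E(v)$; $\succ_v$ and $\sim_v$ are its strict and indifference parts. A matching is $\mu\subseteq E$ with $|\mu(v)|\le1$ for all $v$; $\mu(v)$ denotes the edge of $\mu$ at $v$, or $\emptyset$. An edge $e\in E\setminus\mu$ weakly blocks $\mu$ if $e\succsim_v\mu(v)$ for every $v\in e$; it strongly blocks $\mu$ if additionally $e\succ_w\mu(w)$ for some $w\in e$. $\mu$ is non-uniformly stable if no edge of $E_1\setminus\mu$ weakly blocks $\mu$ and no edge of $E_2\setminus\mu$ strongly blocks $\mu$. For $x\in\mathbb{R}^E$, $x(F)=\sum_{e\in F}x(e)$; $\chi_F$ is the characteristic vector of $F$. $E[\succ_v e]=\{f\in E(v): f\succ_v e\}$, $E[\sim_v e]=\{f\in E(v): f\sim_v e\}$. $\mathbf{S}$ is the set of $x\in\mathbb{R}_+^E$ with (1) $x(E(v))\le1$ for all $v\in V$; (2) $x(e)+\sum_{v\in e}x(E[\succ_v e])\ge1$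 for all $e\in E_1$; (3) $x(E[\sim_v e])+\sum_{w\in e}x(E[\succ_w e])\ge1$ for all $e\in E_2$, $v\in e$. *)

From HB Require Import structures.
From mathcomp Require Import all_boot all_order all_algebra.
From mathcomp Require Import reals.
Set Implicit Arguments. Unset Strict Implicit. Unset Printing Implicit Defensive.
Import Order.TTheory GRing.Theory Num.Theory.
Local Open Scope ring_scope.

(* A bipartite graph: vertices V (finType), side predicate inV1,
   edges E (finType) with ends e = (endpoint in V1, endpoint in V2). *)
Section Defs.
Variables (V E : finType) (ends : E -> V * V).

Definition inc (e : E) (v : V) : bool := ((ends e).1 == v) || ((ends e).2 == v).

Definition bipartite_simple (inV1 : pred V) : Prop :=
  (forall e, inV1 (ends e).1 && ~~ inV1 (ends e).2) /\ injective ends.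

(* pref v e f  means  e ≿_v f  (comparison of edges of E(v));
   every edge is strictly preferred to the empty set by convention. *)
Definition pref_ok (pref : V -> rel E) : Prop :=
  forall v,
    (forall e f, inc e v -> inc f v -> pref v e f || pref v f e) /\
    (forall e f g, inc e v -> inc f v -> inc g v ->
        pref v e f -> pref v f g -> pref v e g).

Definition spref (pref : V -> rel E) v e f := pref v e f && ~~ pref v f e.
Definition ipref (pref : V -> rel E) v e f := pref v e f && pref v f e.

Definition matching (mu : {set E}) : Prop :=
  forall v, (#|[set e in mu | inc e v]| <= 1)%N.

Definition mu_at (mu : {set E}) (v : V) : option E := [pick e in mu | inc e v].

Definition geq_opt (pref : V -> rel E) v e (o : option E) : bool :=
  if o is Some f then pref v e f else true.
Definition gt_opt (pref : V -> rel E) v e (o : option E) : bool :=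
  if o is Some f then spref pref v e f else true.

Definition weakly_blocks pref (mu : {set E}) (e : E) : Prop :=
  e \notin mu /\ forall v, inc e v -> geq_opt pref v e (mu_at mu v).

Definition strongly_blocks pref (mu : {set E}) (e : E) : Prop :=
  weakly_blocks pref mu e /\ exists w, inc e w /\ gt_opt pref w e (mu_at mu w).

(* E1 is given as a set; E2 is its complement *)
Definition nonuniformly_stable pref (E1 : {set E}) (mu : {set E}) : Prop :=
  matching mu /\
  (forall e, e \in E1 -> ~ weakly_blocks pref mu e) /\
  (forall e, e \notin E1 -> ~ strongly_blocks pref mu e).

Variable R : realType.

Definition inS pref (E1 : {set E}) (x : E -> R) : Prop :=
  (forall e, 0 <= x e) /\
  (forall v, \sum_(e | inc e v) x e <= 1) /\
  (forall e, e \in E1 ->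
     x e + \sum_(v | inc e v) \sum_(f | inc f v && spref pref v f e) x f >= 1) /\
  (forall e v, e \notin E1 -> inc e v ->
     \sum_(f | inc f v && ipref pref v f e) x f
     + \sum_(w | inc e w) \sum_(f | inc f w && spref pref w f e) x f >= 1).

Definition extreme_point pref E1 (x : E -> R) : Prop :=
  inS pref E1 x /\
  forall (y z : E -> R) (t : R), inS pref E1 y -> inS pref E1 z ->
    0 < t < 1 -> (forall e, x e = t * y e + (1 - t) * z e) ->
    forall e, y e = z e.

End Defs.

(* For [x] in S, weighting the constraint of each edge [e] by [x e] and using
   [\sum_(e | inc e v) x e * (tied x v e + 2 * above x v e) = mass x v ^+ 2]
   shows that every vertex has mass 0 or 1 and that every edge of the support
   satisfies its constraints with equality.
   If [x] is moreover extreme, no two support edges are tied at a common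
   vertex: otherwise the classes of tied support edges at the V1 ends and at
   the V2 ends impose fewer independent linear equations than there are
   edges, and a nonzero solution is a direction along which [x] can be moved
   both ways inside S.
   Without ties, the support edges that are first choices at their V1 end
   form a matching [mu]; with [delta] the least value of [x] on [mu], both the
   indicator of [mu] and [(x - delta * chi_mu) / (1 - delta)] lie in S, so
   extremality gives [x = chi_mu], and [chi_mu] in S means that [mu] is
   non-uniformly stable. *)

From Pilot Require Import Defs.
From HB Require Import structures.
From mathcomp Require Import all_boot all_order all_algebra.
From mathcomp Require Import reals ring lra zify.
Import Order.TTheory GRing.Theory Num.Theory.
Local Open Scope ring_scope.
Set Implicit Arguments. Unset Strict Implicit. Unset Printing Implicit Defensive.

Lemma exists_nonzero_kernel (F : fieldType) (I J : finType) (Js : {set J})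
    (c : J -> I -> F) :
  (#|Js| < #|I|)%N ->
  exists2 u : I -> F, exists i, u i != 0 &
    forall j, j \in Js -> \sum_i c j i * u i = 0.
Proof.
move=> lt_Js_I.
pose A := \matrix_(k < #|I|, l < #|Js|) c (enum_val l) (enum_val k).
have /matrix0Pn[k0 [i0 nz_ki]] : kermx A != 0.
  rewrite -mxrank_eq0 mxrank_ker subn_eq0 -ltnNge.
  exact: leq_ltn_trans (rank_leq_col A) lt_Js_I.
exists (fun i => kermx A k0 (enum_rank i)).
  by exists (enum_val i0); rewrite enum_valK.
move=> j Jj.
have := congr1 (fun M : 'M[F]_(#|I|, #|Js|) => M k0 (enum_rank_in Jj j)) (mulmx_ker A).
rewrite !mxE => kerA_j; rewrite -[RHS]kerA_j (reindex (@enum_val I predT)) /=; last first.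
  by exists (@enum_rank I) => i _; rewrite ?enum_valK ?enum_rankK.
by apply: eq_bigr => k _; rewrite [A k _]mxE enum_rankK_in // enum_valK mulrC.
Qed.

Lemma exists_maximal (T : finType) (A : {set T}) (r : rel T) :
  {in A & &, forall a b c, r a b -> r b c -> r a c} -> irreflexive r ->
  A != set0 -> exists2 e, e \in A & {in A, forall f, ~~ r f e}.
Proof.
move=> r_trans r_irr /set0Pn[e0 Ae0].
have [e Ae e_max] := arg_maxnP (fun e => #|[set h in A | r e h]|) Ae0.
exists e => // f Af; apply/negP => rfe.
have := e_max f Af; rewrite /= leqNgt => /negP; apply; apply: proper_card.
apply/properP; split.
  apply/subsetP => h; rewrite !inE => /andP[Ah reh]; rewrite Ah.
  exact: r_trans rfe reh.
by exists e; rewrite !inE ?rfe ?r_irr ?andbF ?andbT.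
Qed.

Lemma exists_scale_below (R : realFieldType) (T : finType) (x u : T -> R) :
  (forall e, 0 <= x e) -> (forall e, x e = 0 -> u e = 0) ->
  exists2 eps : R, 0 < eps & forall e, eps * `|u e| <= x e.
Proof.
move=> x_ge0 u_supp; pose S := \sum_e `|u e| / x e.
have S_ge0 : 0 <= S by apply: sumr_ge0 => e _; rewrite divr_ge0.
exists (1 + S)^-1; first by rewrite invr_gt0; lra.
move=> e; have [xe0 | xe_pos] := eqVneq (x e) 0.
  by rewrite xe0 u_supp // normr0 mulr0.
have {xe_pos} xe_gt0 : 0 < x e by rewrite lt_def xe_pos x_ge0.
have : `|u e| / x e <= S.
  by rewrite /S (bigD1 e) //= lerDl sumr_ge0 // => f _; rewrite divr_ge0.
rewrite ler_pdivrMr // => ue_le; rewrite mulrC ler_pdivrMr; last lra.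
nra.
Qed.

Section StablePolytope.
Variables (R : realType) (V E : finType) (ends : E -> V * V)
  (inV1 : pred V) (E1 : {set E}) (pref : V -> rel E).
Hypothesis bip : bipartite_simple ends inV1.
Hypothesis pref_wf : pref_ok ends pref.

Local Notation inc := (inc ends).
Local Notation spref := (spref pref).
Local Notation ipref := (ipref pref).
Local Notation inS := (inS ends pref E1).

Lemma end1_inV1 e : inV1 (ends e).1.
Proof. by case: bip => sides _; case/andP: (sides e). Qed.

Lemma end2_notinV1 e : ~~ inV1 (ends e).2.
Proof. by case: bip => sides _; case/andP: (sides e). Qed.

Lemma inc_end1 e : inc e (ends e).1. Proof. by rewrite /Defs.inc eqxx. Qed.
Lemma inc_end2 e : inc e (ends e).2. Proof. by rewrite /Defs.inc eqxx orbT. Qed.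

Lemma end1_of_inc e v : inc e v -> inV1 v -> (ends e).1 = v.
Proof. by case/orP => /eqP <- // V1b; have := end2_notinV1 e; rewrite V1b. Qed.

Lemma end2_of_inc e v : inc e v -> ~~ inV1 v -> (ends e).2 = v.
Proof. by case/orP => /eqP <- // /negP; rewrite end1_inV1. Qed.

Lemma sum_incident e (F : V -> R) :
  \sum_(v | inc e v) F v = F (ends e).1 + F (ends e).2.
Proof.
have ends_neq : (ends e).1 != (ends e).2.
  by apply: contraNneq (end2_notinV1 e) => <-; apply: end1_inV1.
rewrite (bigD1 (ends e).1) ?inc_end1 //= (bigD1 (ends e).2) /=; last first.
  by rewrite inc_end2 eq_sym.
rewrite big1 ?addr0 // => v /andP[/andP[]].
by rewrite /Defs.inc => /orP[] /eqP <-; rewrite eqxx.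
Qed.

Lemma pref_total v e f : inc e v -> inc f v -> pref v e f || pref v f e.
Proof. by case: (pref_wf v) => tot _; apply: tot. Qed.

Lemma pref_trans v e f g : inc e v -> inc f v -> inc g v ->
  pref v e f -> pref v f g -> pref v e g.
Proof. by case: (pref_wf v) => _; apply. Qed.

Lemma ipref_refl v e : inc e v -> ipref v e e.
Proof. by move=> ev; rewrite /Defs.ipref andbb -[pref v e e]orbb pref_total. Qed.

Lemma ipref_sym v e f : ipref v e f = ipref v f e.
Proof. exact: andbC. Qed.

Lemma ipref_trans v e f g : inc e v -> inc f v -> inc g v ->
  ipref v e f -> ipref v f g -> ipref v e g.
Proof.
move=> ev fv gv /andP[ef fe] /andP[fg gf].
by rewrite /Defs.ipref (pref_trans ev fv gv) ?(pref_trans gv fv ev).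
Qed.

Lemma spref_irr v e : ~~ spref v e e.
Proof. by rewrite /Defs.spref andbN. Qed.

Lemma spref_asym v e f : spref v e f -> ~~ spref v f e.
Proof. by case/andP=> ef _; rewrite /Defs.spref ef andbF. Qed.

Lemma spref_ipref v e f : spref v e f -> ~~ ipref v f e.
Proof. by case/andP=> _ nfe; rewrite /Defs.ipref (negbTE nfe). Qed.

Lemma ipref_sprefF v e f : ipref v e f -> spref v e f = false.
Proof. by case/andP=> _ fe; rewrite /Defs.spref fe andbF. Qed.

Lemma pref_trichotomy v e f : inc e v -> inc f v ->
  [|| spref v e f, ipref v e f | spref v f e].
Proof.
move=> ev fv; rewrite /Defs.spref /Defs.ipref.
by case: (pref v e f) (pref v f e) (pref_total ev fv) => [] [].
Qed.

Lemma spref_trans v e f g : inc e v -> inc f v -> inc g v ->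
  spref v e f -> spref v f g -> spref v e g.
Proof.
move=> ev fv gv /andP[ef nfe] /andP[fg _]; rewrite /Defs.spref.
rewrite (pref_trans ev fv gv) //; apply: contraNN nfe => ge.
exact: pref_trans fv gv ev fg ge.
Qed.

Lemma spref_ipref_trans v e f g : inc e v -> inc f v -> inc g v ->
  spref v e f -> ipref v f g -> spref v e g.
Proof.
move=> ev fv gv /andP[ef nfe] /andP[fg _]; rewrite /Defs.spref.
rewrite (pref_trans ev fv gv) //; apply: contraNN nfe => ge.
exact: pref_trans fv gv ev fg ge.
Qed.

Lemma ipref_spref_trans v e f g : inc e v -> inc f v -> inc g v ->
  ipref v e f -> spref v f g -> spref v e g.
Proof.
move=> ev fv gv /andP[ef fe] /andP[fg ngf]; rewrite /Defs.spref.
rewrite (pref_trans ev fv gv) //; apply: contraNN ngf => ge.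
exact: pref_trans gv ev fv ge ef.
Qed.

Definition mass (x : E -> R) v := \sum_(f | inc f v) x f.
Definition above (x : E -> R) v g := \sum_(f | inc f v && spref v f g) x f.
Definition tied (x : E -> R) v g := \sum_(f | inc f v && ipref v f g) x f.
Definition below (x : E -> R) v g := \sum_(f | inc f v && spref v g f) x f.
Definition above_ends (x : E -> R) g := above x (ends g).1 g + above x (ends g).2 g.

Lemma inS_iff x : inS x <->
  [/\ forall e, 0 <= x e, forall v, mass x v <= 1,
      forall e, e \in E1 -> 1 <= x e + above_ends x e &
      forall e v, e \notin E1 -> inc e v -> 1 <= tied x v e + above_ends x e].
Proof.
rewrite /Defs.inS /above_ends; split.
  case=> x_ge0 [mass_le1 [cE1 cE2]]; split => //.
    by move=> e E1e; have := cE1 e E1e; rewrite sum_incident.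
  by move=> e v E2e ev; have := cE2 e v E2e ev; rewrite sum_incident.
case=> x_ge0 mass_le1 cE1 cE2; do 3!split => //.
  by move=> e E1e; rewrite sum_incident; apply: cE1.
by move=> e v E2e ev; rewrite sum_incident; apply: cE2.
Qed.

Lemma le_sum_incident (x : E -> R) v (Q : pred E) f :
  (forall e, 0 <= x e) -> inc f v -> Q f -> x f <= \sum_(h | inc h v && Q h) x h.
Proof.
move=> x_ge0 fv Qf; rewrite (bigD1 f) /=; last by rewrite fv Qf.
by rewrite lerDl sumr_ge0.
Qed.

Lemma le_tied (x : E -> R) v e : (forall e, 0 <= x e) -> inc e v -> x e <= tied x v e.
Proof. by move=> x_ge0 ev; apply: le_sum_incident; rewrite ?ipref_refl. Qed.

Lemma mass_split x v g : inc g v ->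
  mass x v = above x v g + tied x v g + below x v g.
Proof.
move=> gv; rewrite /mass (bigID (fun f => spref v f g)) /= -addrA; congr (_ + _).
rewrite (bigID (fun f => ipref v f g)) /=; congr (_ + _); apply: eq_bigl => f.
  case fv: (inc f v) => //=.
  by case fg: (ipref v f g); rewrite ?andbF ?andbT ?ipref_sprefF.
case fv: (inc f v) => //=; have := pref_trichotomy fv gv.
case fg: (spref v f g) => /=; first by rewrite (negbTE (spref_asym fg)).
case: (boolP (ipref v f g)) => [fg' _ | _ /= gf]; last by rewrite gf.
by rewrite ipref_sym in fg'; rewrite ipref_sprefF.
Qed.

(** * Complementary slackness *)

(* Pairing each ordered pair of incident edges, a tie is counted once from
   each side and a strict preference twice from one side. *)
Lemma rank_weighted_mass x v :
  \sum_(e | inc e v) x e * (tied x v e + 2 * above x v e) = mass x v ^+ 2.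
Proof.
pose w e f : R := (ipref v f e)%:R + 2 * (spref v f e)%:R.
have w_sym e f : inc e v -> inc f v -> w e f + w f e = 2.
  move=> ev fv; have := pref_total ev fv; rewrite /w /Defs.ipref /Defs.spref.
  by case: (pref v e f); case: (pref v f e) => //= _; ring.
have -> : \sum_(e | inc e v) x e * (tied x v e + 2 * above x v e) =
          \sum_(e | inc e v) \sum_(f | inc f v) x e * x f * w e f.
  apply: eq_bigr => e _; rewrite /tied /above !big_mkcondr.
  rewrite mulr_sumr -big_split mulr_sumr; apply: eq_bigr => f _.
  by rewrite /w; case: (ipref v f e); case: (spref v f e) => /=; ring.
apply: (mulfI (x := 2)); first by rewrite pnatr_eq0.
rewrite mulr2n mulrDl mul1r {1}exchange_big -big_split /= expr2 /mass.
rewrite mulr_suml mulr_sumr; apply: eq_bigr => e ev.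
rewrite -big_split mulr_sumr mulr_sumr; apply: eq_bigr => f fv /=.
by rewrite (mulrC (x f)) -mulrDr addrC w_sym //; ring.
Qed.

Definition rank_weight (x : E -> R) e :=
  \sum_(v | inc e v) (tied x v e + 2 * above x v e).

Lemma sum_rank_weight x :
  \sum_e x e * rank_weight x e = \sum_v mass x v ^+ 2.
Proof.
rewrite -(eq_bigr _ (fun v _ => rank_weighted_mass x v)).
rewrite (exchange_big_dep xpredT) //=; apply: eq_bigr => e _.
by rewrite mulr_sumr.
Qed.

Lemma sum_mass x : \sum_v mass x v = \sum_e x e * 2.
Proof.
rewrite /mass (exchange_big_dep xpredT) //=; apply: eq_bigr => e _.
by rewrite sum_incident mulr2n mulrDr mulr1.
Qed.

Lemma rank_weightE x e : rank_weight x e =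
  tied x (ends e).1 e + tied x (ends e).2 e + 2 * above_ends x e.
Proof. by rewrite /rank_weight sum_incident /above_ends; ring. Qed.

Lemma rank_weight_ge2 x e : inS x -> 2 <= rank_weight x e.
Proof.
case/inS_iff=> x_ge0 _ cE1 cE2; rewrite rank_weightE.
have := le_tied x_ge0 (inc_end1 e); have := le_tied x_ge0 (inc_end2 e).
have [E1e | E2e] := boolP (e \in E1); first by have := cE1 e E1e; lra.
by have := cE2 e _ E2e (inc_end1 e); have := cE2 e _ E2e (inc_end2 e); lra.
Qed.

Lemma rank_weight_eq2 x e : inS x -> rank_weight x e = 2 ->
  [/\ tied x (ends e).1 e = tied x (ends e).2 e,
      tied x (ends e).1 e + above_ends x e = 1 &
      e \in E1 -> tied x (ends e).1 e = x e].
Proof.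
case/inS_iff=> x_ge0 _ cE1 cE2; rewrite rank_weightE => Q2.
have := le_tied x_ge0 (inc_end1 e); have := le_tied x_ge0 (inc_end2 e).
have [E1e | E2e] := boolP (e \in E1).
  by have := cE1 e E1e => *; split; lra.
have := cE2 e _ E2e (inc_end1 e); have := cE2 e _ E2e (inc_end2 e).
by move=> *; split; lra.
Qed.

(* Summing [rank_weight_ge2] against [x] and comparing with [sum_mass] gives
   [\sum_e x e * (rank_weight x e - 2) = \sum_v (mass x v ^+ 2 - mass x v)],
   a nonnegative quantity equal to a nonpositive one. *)
Lemma inS_slack x : inS x ->
  (forall v, mass x v ^+ 2 = mass x v) /\
  (forall e, 0 < x e -> rank_weight x e = 2).
Proof.
move=> xS; have [x_ge0 mass_le1 _ _] := (inS_iff x).1 xS.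
have lhs_ge0 e : 0 <= x e * (rank_weight x e - 2).
  by rewrite mulr_ge0 // subr_ge0 rank_weight_ge2.
have rhs_ge0 v : 0 <= mass x v - mass x v ^+ 2.
  have : 0 <= mass x v by apply: sumr_ge0.
  by have := mass_le1 v; rewrite expr2; nra.
have balance : \sum_e x e * (rank_weight x e - 2) +
               \sum_v (mass x v - mass x v ^+ 2) = 0.
  have -> : \sum_e x e * (rank_weight x e - 2) =
            \sum_e x e * rank_weight x e - \sum_e x e * 2.
    by rewrite -sumrB; apply: eq_bigr => e _; rewrite mulrBr.
  by rewrite sumrB sum_rank_weight sum_mass; ring.
have [lhs0 rhs0] : \sum_e x e * (rank_weight x e - 2) = 0 /\
                   \sum_v (mass x v - mass x v ^+ 2) = 0.
  have : 0 <= \sum_e x e * (rank_weight x e - 2) by apply: sumr_ge0.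
  have : 0 <= \sum_v (mass x v - mass x v ^+ 2) by apply: sumr_ge0.
  by move: balance; lra.
split=> [v | e xe_gt0].
  have /eqP := psumr_eq0P (fun v _ => rhs_ge0 v) rhs0 (i := v) isT.
  by rewrite subr_eq0 eq_sym => /eqP.
have /eqP := psumr_eq0P (fun e _ => lhs_ge0 e) lhs0 (i := e) isT.
by rewrite mulf_eq0 gt_eqF //= subr_eq0 => /eqP.
Qed.

Lemma inS_mass01 x v : inS x -> mass x v = 0 \/ mass x v = 1.
Proof.
move=> xS; have /eqP := (inS_slack xS).1 v.
rewrite expr2 -subr_eq0 -{3}(mulr1 (mass x v)) -mulrBr mulf_eq0 subr_eq0.
by case/orP=> /eqP; [left | right].
Qed.

Lemma inS_tight x e : inS x -> 0 < x e ->
  [/\ tied x (ends e).1 e = tied x (ends e).2 e,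
      tied x (ends e).1 e + above_ends x e = 1 &
      e \in E1 -> tied x (ends e).1 e = x e].
Proof. by move=> xS xe_gt0; apply: rank_weight_eq2 => //; apply: (inS_slack xS).2. Qed.

(** * Extreme points have no ties in their support *)

Definition balanced (u : E -> R) := forall v (P : pred E),
  (forall h g, inc h v -> inc g v -> ipref v h g -> P g -> P h) ->
  \sum_(h | inc h v && P h) u h = 0.

Lemma inS_perturb x u k : inS x -> balanced u -> {in E1, forall e, u e = 0} ->
  (forall e, 0 <= x e + k * u e) -> inS (fun e => x e + k * u e).
Proof.
case/inS_iff=> _ mass_le1 cE1 cE2 u_bal u_E1 y_ge0.
have sumD (Q : pred E) :
    \sum_(h | Q h) (x h + k * u h) = \sum_(h | Q h) x h + k * \sum_(h | Q h) u h.
  by rewrite big_split mulr_sumr.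
have mass_u v : mass u v = 0.
  by rewrite -(u_bal v predT) //; apply: eq_bigl => h; rewrite andbT.
have above_u v g : inc g v -> above u v g = 0.
  by move=> gv; apply: u_bal => h f hv fv; apply: ipref_spref_trans.
have tied_u v g : inc g v -> tied u v g = 0.
  by move=> gv; apply: u_bal => h f hv fv; apply: ipref_trans.
have above_ends_y e : above_ends (fun e => x e + k * u e) e = above_ends x e.
  rewrite /above_ends /above !sumD -!/(above u _ e).
  by rewrite !above_u ?inc_end1 ?inc_end2 // mulr0 !addr0.
apply/inS_iff; split => //.
- by move=> v; rewrite /mass sumD -/(mass u v) mass_u mulr0 addr0; apply: mass_le1.
- by move=> e E1e; rewrite above_ends_y u_E1 // mulr0 addr0; apply: cE1.
- move=> e v E2e ev; rewrite above_ends_y /tied sumD -/(tied u v e).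
  by rewrite tied_u // mulr0 addr0; apply: cE2.
Qed.

Lemma extreme_balanced_eq0 (x u : E -> R) : extreme_point ends pref E1 x -> balanced u ->
  {in E1, forall e, u e = 0} -> (forall e, x e = 0 -> u e = 0) ->
  forall e, u e = 0.
Proof.
case=> xS x_ext u_bal u_E1 u_supp e.
have [x_ge0 _ _ _] := (inS_iff x).1 xS.
have [eps eps_gt0 eps_le] := exists_scale_below x_ge0 u_supp.
have perturb_ge0 k : `|k| = eps -> forall f, 0 <= x f + k * u f.
  move=> k_eps f; have := eps_le f; rewrite -k_eps -normrM => le_x.
  by have := ler_norm (- (k * u f)); rewrite normrN; lra.
have yS := inS_perturb xS u_bal u_E1 (perturb_ge0 eps (gtr0_norm eps_gt0)).
have zS := inS_perturb xS u_bal u_E1 (perturb_ge0 (- eps) _).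
have /(_ e) : forall f, x f + eps * u f = x f + - eps * u f.
  apply: (x_ext _ _ (1 / 2) yS (zS _)); first by rewrite normrN gtr0_norm.
    by apply/andP; split; lra.
  by move=> f; lra.
move=> yz; have /eqP : eps * u e = 0 by lra.
by rewrite mulf_eq0 gt_eqF // => /eqP.
Qed.

Definition side (s : bool) g := if s then (ends g).1 else (ends g).2.

Definition tie (s : bool) : rel E :=
  fun h h' => (side s h == side s h') && ipref (side s h) h h'.

Lemma inc_side s g : inc g (side s g).
Proof. by case: s; rewrite /side ?inc_end1 ?inc_end2. Qed.

Lemma side_inV1 s g : inV1 (side s g) = s.
Proof. by case: s; rewrite /side ?end1_inV1 // (negbTE (end2_notinV1 g)). Qed.

Lemma inc_sideE s h v : inV1 v = s -> inc h v = (side s h == v).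
Proof.
move=> V1v; apply/idP/eqP => [hv | <-]; last exact: inc_side.
rewrite /side -V1v; case: ifP => [V1 | /negbT nV1].
  exact: end1_of_inc.
exact: end2_of_inc.
Qed.

Lemma tie_equiv s : equivalence_rel (tie s).
Proof.
have tie_trans h1 h2 h3 : tie s h1 h2 -> tie s h2 h3 -> tie s h1 h3.
  rewrite /tie => /andP[/eqP e12 t12] /andP[/eqP e23 t23].
  rewrite e12 e23 eqxx; rewrite e12 in t12.
  have h1v : inc h1 (side s h2) by rewrite -e12 inc_side.
  have h3v : inc h3 (side s h2) by rewrite e23 inc_side.
  by rewrite -e23 (ipref_trans h1v (inc_side s h2) h3v t12) // e23.
move=> h1 h2 h3; split; first by rewrite /tie eqxx ipref_refl ?inc_side.
have tie_sym h h' : tie s h h' -> tie s h' h.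
  by rewrite /tie => /andP[/eqP <- t]; rewrite eqxx ipref_sym.
move=> t12; apply/idP/idP; last exact: tie_trans.
exact: tie_trans (tie_sym _ _ t12).
Qed.

Lemma tied_ipref x v h g : inc h v -> inc g v -> ipref v h g ->
  tied x v h = tied x v g.
Proof.
move=> hv gv hg; apply: eq_bigl => f; apply: andb_id2l => fv.
apply/idP/idP => [fh | fg]; first exact: ipref_trans fv hv gv fh hg.
by apply: ipref_trans fv gv hv fg _; rewrite ipref_sym.
Qed.

Lemma le_tied_pair x v g h : (forall e, 0 <= x e) -> inc g v -> inc h v ->
  ipref v h g -> h != g -> x g + x h <= tied x v g.
Proof.
move=> x_ge0 gv hv hg hg_neq; rewrite /tied (bigD1 g) /= ?gv ?ipref_refl //.
rewrite (bigD1 h) /= ?hv ?hg ?hg_neq // addrA lerDl sumr_ge0 //.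
Qed.

Section TieClasses.
Variable x : E -> R.
Hypothesis xS : inS x.

Let x_ge0 : forall e, 0 <= x e. Proof. by case: ((inS_iff x).1 xS). Qed.

Definition tie_support := [set g | 0 < x g < tied x (ends g).1 g].

Lemma tie_support_notin_E1 e : e \in E1 -> e \notin tie_support.
Proof.
move=> E1e; rewrite inE; apply/negP => /andP[xe_gt0].
by case: (inS_tight xS xe_gt0) => _ _ /(_ E1e) ->; rewrite ltxx.
Qed.

Lemma tied_side s g : 0 < x g -> tied x (side s g) g = tied x (ends g).1 g.
Proof. by case: s => // /(inS_tight xS)[]. Qed.

Lemma tie_support_closed s g h :
  g \in tie_support -> tie s g h -> 0 < x h -> h \in tie_support.
Proof.
move=> Fg /andP[/eqP gh_side gh] xh_gt0; have [-> // | hg_neq] := eqVneq h g.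
have hv : inc h (side s g) by rewrite gh_side inc_side.
move: Fg; rewrite !inE xh_gt0 -(tied_side s xh_gt0) -gh_side => /andP[xg_gt0 _].
rewrite (tied_ipref x hv (inc_side s g)); last by rewrite ipref_sym.
have := le_tied_pair x_ge0 (inc_side s g) hv _ hg_neq; rewrite ipref_sym => /(_ gh).
lra.
Qed.

Lemma tie_partner s g : g \in tie_support ->
  exists h, [/\ h != g, tie s g h & h \in tie_support].
Proof.
move=> Fg; have := Fg; rewrite inE => /andP[xg_gt0].
rewrite -(tied_side s xg_gt0); set v := side s g => xg_lt.
have [h /and4P[hv hg hg_neq xh_gt0] |] :=
  pickP [pred h | [&& inc h v, ipref v h g, h != g & 0 < x h]].
  have gh : tie s g h.
    have hside : side s h = v by apply/eqP; rewrite -inc_sideE ?side_inV1.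
    by rewrite /tie hside eqxx ipref_sym.
  by exists h; split => //; apply: tie_support_closed gh xh_gt0.
move=> no_partner; have gv : inc g v := inc_side s g.
move: xg_lt; rewrite /tied (bigD1 g) /= ?gv ?ipref_refl //.
rewrite big1 ?addr0 ?ltxx // => f /andP[/andP[fv fg] fg_neq].
have := no_partner f; rewrite /= fv fg fg_neq /= => /negbT; rewrite -leNgt => xf_le0.
by apply/eqP; rewrite eq_le xf_le0 x_ge0.
Qed.

Definition tie_classes s := equivalence_partition (tie s) tie_support.

Lemma tie_classes_partition s : partition (tie_classes s) tie_support.
Proof. by apply: equivalence_partitionP => ? ? ? _ _ _; apply: tie_equiv. Qed.

Lemma card_tie_classes s : (2 * #|tie_classes s| <= #|tie_support|)%N.
Proof.
rewrite (card_partition (tie_classes_partition s)) mulnC -sum_nat_const.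
apply: leq_sum => _ /imsetP[g Fg ->]; apply/card_gt1P.
have [h [hg_neq gh Fh]] := tie_partner s Fg.
have gg : tie s g g by have [->] := tie_equiv s g g g.
by exists g, h; split; [apply/setIdP | apply/setIdP | rewrite eq_sym].
Qed.

Lemma sum_over_tie_classes s (u : E -> R) :
  \sum_(i in tie_support) u i = \sum_(C in tie_classes s) \sum_(i in C) u i.
Proof.
have /and3P[/eqP cover_F triv _] := tie_classes_partition s.
by rewrite -{1}cover_F big_trivIset.
Qed.

(* One relation among the class sums (both partitions sum to the total over
   the tie support) is redundant, so one class can be dropped when counting
   equations; this is what makes the system underdetermined. *)
Lemma exists_class_kernel : tie_support != set0 ->
  exists u : E -> R, [/\ exists i, u i != 0,
    forall e, e \notin tie_support -> u e = 0 &
    forall s C, C \in tie_classes s -> \sum_(i in C) u i = 0].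
Proof.
move=> /set0Pn[g0 Fg0].
pose C0 := [set h in tie_support | tie false g0 h].
have C0_class : C0 \in tie_classes false by apply/imsetP; exists g0.
pose Js := [set [set e] | e in ~: tie_support] :|: tie_classes true
           :|: tie_classes false :\ C0.
have card_Js : (#|Js| < #|E|)%N.
  have := leq_imset_card (fun e => [set e]) (~: tie_support).
  have := (leq_card_setU [set [set e] | e in ~: tie_support] (tie_classes true)).1.
  have := (leq_card_setU ([set [set e] | e in ~: tie_support] :|: tie_classes true)
                          (tie_classes false :\ C0)).1.
  have := cardsC tie_support; have := cardsD1 C0 (tie_classes false).
  have := card_tie_classes true; have := card_tie_classes false.
  have := cardsD1 g0 tie_support; rewrite /Js C0_class Fg0; lia.
have [u [i0 ui0] u_Js] :=
  exists_nonzero_kernel (fun (C : {set E}) i => (i \in C)%:R : R) card_Js.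
have sum_u C : C \in Js -> \sum_(i in C) u i = 0.
  move/u_Js => sumC; rewrite -[RHS]sumC big_mkcond; apply: eq_bigr => i _.
  by case: (i \in C); rewrite ?mul1r ?mul0r.
have u_off e : e \notin tie_support -> u e = 0.
  move=> nFe; have := sum_u [set e]; rewrite big_set1; apply.
  by rewrite /Js !in_setU imset_f ?in_setC.
have sum_F : \sum_(i in tie_support) u i = 0.
  rewrite (sum_over_tie_classes true) big1 // => C CL.
  by apply: sum_u; rewrite /Js !in_setU CL orbT.
have sum_C0 : \sum_(i in C0) u i = 0.
  move: sum_F; rewrite (sum_over_tie_classes false) (bigD1 C0) //=.
  rewrite [X in _ + X]big1 ?addr0 //.
  by move=> C /andP[CL CC0]; apply: sum_u; rewrite /Js in_setU in_setD1 CL CC0 orbT.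
exists u; split => //; first by exists i0.
move=> s C CL; have [-> // | CC0] := eqVneq C C0.
by apply: sum_u; rewrite /Js !in_setU in_setD1 CC0; case: s CL => ->; rewrite ?orbT.
Qed.

Lemma balanced_of_class_sums u :
  (forall e, e \notin tie_support -> u e = 0) ->
  (forall s C, C \in tie_classes s -> \sum_(i in C) u i = 0) -> balanced u.
Proof.
move=> u_off u_classes v P P_tie_closed; set s := inV1 v.
rewrite big_mkcond (bigID (mem tie_support)) /= [X in _ + X]big1 ?addr0; last first.
  by move=> h /negbTE nFh; rewrite u_off ?nFh //; case: ifP.
rewrite (sum_over_tie_classes s); apply: big1 => _ /imsetP[g Fg ->].
have inside h : h \in [set y in tie_support | tie s g y] ->
    (inc h v && P h) = (inc g v && P g).
  rewrite inE => /andP[_ /andP[/eqP gh_side gh]].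
  rewrite !(inc_sideE _ (erefl s)) -gh_side; case: eqP => //= gv_side.
  rewrite gv_side in gh.
  have gv : inc g v by rewrite -gv_side inc_side.
  have hv : inc h v by rewrite -gv_side gh_side inc_side.
  apply/idP/idP; first exact: P_tie_closed.
  by apply: P_tie_closed; rewrite // ipref_sym.
have [gP | ngP] := boolP (inc g v && P g).
  rewrite -[RHS](u_classes s _ (imset_f _ Fg)); apply: eq_bigr => h /inside.
  by rewrite gP => ->.
by apply: big1 => h /inside; rewrite (negbTE ngP) => ->.
Qed.

End TieClasses.

Lemma extreme_untied (x : E -> R) : extreme_point ends pref E1 x ->
  forall g, 0 < x g -> tied x (ends g).1 g = x g.
Proof.
move=> x_ext; have xS := x_ext.1; have [x_ge0 _ _ _] := (inS_iff x).1 xS.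
move=> g xg_gt0; apply/eqP; rewrite eq_le le_tied ?inc_end1 // andbT leNgt.
apply/negP => x_lt_tied.
have /exists_class_kernel[|u [[i ui] u_off u_classes]] := xS.
  by apply/set0Pn; exists g; rewrite inE xg_gt0.
have u0 := extreme_balanced_eq0 x_ext (balanced_of_class_sums u_off u_classes).
move: ui; rewrite u0 ?eqxx // => [e E1e | e xe0].
  by apply: u_off; apply: tie_support_notin_E1.
by apply: u_off; rewrite inE xe0 ltxx.
Qed.

(** * Stability of a matching from its indicator vector *)

Section Matching.
Variable mu : {set E}.
Hypothesis mu_matching : matching ends mu.

Local Notation ind := (fun e => (e \in mu)%:R : R).

Lemma mu_at_some v t : mu_at ends mu v = Some t -> t \in mu /\ inc t v.
Proof. by rewrite /mu_at; case: pickP => // t' /andP[] ? ? [<-]. Qed.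

Lemma notin_unmatched v g : mu_at ends mu v = None -> inc g v -> g \notin mu.
Proof.
rewrite /mu_at; case: pickP => // none_at _ gv; apply/negP => mu_g.
by have := none_at g; rewrite /= mu_g gv.
Qed.

Lemma notin_other v t g : mu_at ends mu v = Some t -> inc g v -> g != t ->
  g \notin mu.
Proof.
move=> /mu_at_some[mu_t tv] gv; apply: contra => mu_g.
by apply/eqP/(card_le1_eqP (mu_matching v)); rewrite inE ?mu_g ?gv ?mu_t ?tv.
Qed.

Lemma sum_indicator v (P : pred E) :
  \sum_(f | inc f v && P f) ind f = if mu_at ends mu v is Some t then (P t)%:R else 0.
Proof.
case t_at: (mu_at ends mu v) => [t|]; last first.
  by apply: big1 => f /andP[fv _]; rewrite (negbTE (notin_unmatched t_at fv)).
have [mu_t tv] := mu_at_some t_at.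
have others f : inc f v -> f != t -> ind f = 0.
  by move=> fv ft; rewrite /= (negbTE (notin_other t_at fv ft)).
have [Pt | nPt] := boolP (P t).
  rewrite (bigD1 t) /= ?tv ?Pt // mu_t big1 ?addr0 // => f /andP[/andP[fv _]].
  exact: others.
apply: big1 => f /andP[fv Pf]; apply: others fv _.
by apply: contraNneq nPt => <-.
Qed.

Lemma above_indicator v g :
  above ind v g = if mu_at ends mu v is Some t then (spref v t g)%:R else 0.
Proof. exact: sum_indicator. Qed.

Lemma tied_indicator v g :
  tied ind v g = if mu_at ends mu v is Some t then (ipref v t g)%:R else 0.
Proof. exact: sum_indicator. Qed.

Lemma sum_indicator_gt0 v (P : pred E) :
  0 < \sum_(f | inc f v && P f) ind f -> exists2 t, mu_at ends mu v = Some t & P t.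
Proof.
rewrite sum_indicator; case: (mu_at ends mu v) => [t|]; last by rewrite ltxx.
case Pt: (P t) => [|]; last by rewrite ltxx.
by exists t.
Qed.

Lemma stable_of_indicator_inS : inS ind -> nonuniformly_stable ends pref E1 mu.
Proof.
case/inS_iff=> ind_ge0 _ cE1 cE2.
have above_gt0 e : 0 < above_ends ind e ->
    ~ forall v, inc e v -> geq_opt pref v e (mu_at ends mu v).
  move=> pos geq; have [v ev above_v] : exists2 v, inc e v & 0 < above ind v e.
    have [pos1 | le1] := ltrP 0 (above ind (ends e).1 e).
      by exists (ends e).1; rewrite ?inc_end1.
    exists (ends e).2; rewrite ?inc_end2 //; move: pos; rewrite /above_ends.
    have : 0 <= above ind (ends e).1 e by apply: sumr_ge0.
    lra.
  have [t t_at /andP[_ nte]] := sum_indicator_gt0 above_v.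
  by have := geq v ev; rewrite t_at /= (negbTE nte).
split=> //; split=> [e E1e [e_notin geq] | e E2e [[e_notin geq] [w [ew gt]]]].
  apply: (above_gt0 e _ geq); have := cE1 e E1e; rewrite (negbTE e_notin) /=; lra.
have [|above_le0] := ltrP 0 (above_ends ind e); first by move/above_gt0.
have : 0 < tied ind w e by have := cE2 e w E2e ew; lra.
case/sum_indicator_gt0 => t t_at /andP[te _].
by move: gt; rewrite t_at /= /Defs.spref te andbF.
Qed.

End Matching.

(** * Integrality of tie-free points *)

Section Integrality.
Variable x : E -> R.
Hypothesis xS : inS x.
Hypothesis x_untied : forall g, 0 < x g -> tied x (ends g).1 g = x g.

Let x_ge0 : forall e, 0 <= x e. Proof. by case: ((inS_iff x).1 xS). Qed.

Lemma tied_untied v e : inc e v -> 0 < x e -> tied x v e = x e.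
Proof.
case/orP=> /eqP <- xe_gt0; first exact: x_untied.
by case: (inS_tight xS xe_gt0) => <- _ _; apply: x_untied.
Qed.

Lemma untied_ipref_eq v e f : inc e v -> inc f v -> 0 < x e -> 0 < x f ->
  ipref v f e -> f = e.
Proof.
move=> ev fv xe_gt0 xf_gt0 fe; apply/eqP; apply/negP => /negP fe_neq.
by have := le_tied_pair x_ge0 ev fv fe fe_neq; rewrite tied_untied //; lra.
Qed.

Lemma mass_pos v f : inc f v -> 0 < x f -> mass x v = 1.
Proof.
move=> fv xf_gt0; case: (inS_mass01 v xS) => // mass0.
have := le_sum_incident (Q := predT) x_ge0 fv isT.
have -> : \sum_(h | inc h v && predT h) x h = mass x v.
  by apply: eq_bigl => h; rewrite andbT.
lra.
Qed.

Lemma above_end1_below_end2 e : 0 < x e -> above x (ends e).1 e = below x (ends e).2 e.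
Proof.
move=> xe_gt0; have [_ tight _] := inS_tight xS xe_gt0.
have := mass_split x (inc_end2 e); rewrite (mass_pos (inc_end2 e) xe_gt0).
rewrite !tied_untied ?inc_end1 ?inc_end2 // in tight *; move: tight.
by rewrite /above_ends; lra.
Qed.

Lemma sum_support_eq0 v (Q : pred E) :
  (forall f, inc f v -> Q f -> 0 < x f -> False) -> \sum_(f | inc f v && Q f) x f = 0.
Proof.
move=> noQ; apply: big1 => f /andP[fv Qf]; apply/eqP; rewrite eq_le x_ge0 andbT.
by rewrite leNgt; apply/negP; apply: noQ.
Qed.

(* By [above_end1_below_end2] these are also the support edges that are last
   choices at their V2 end. *)
Definition matching_of := [set e | (0 < x e) && (above x (ends e).1 e == 0)].

Lemma matching_of_pos e : e \in matching_of -> 0 < x e.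
Proof. by rewrite inE => /andP[]. Qed.

Lemma matching_of_top e f : e \in matching_of -> inc f (ends e).1 -> 0 < x f ->
  ~~ spref (ends e).1 f e.
Proof.
rewrite inE => /andP[xe_gt0 /eqP above0] fa xf_gt0; apply/negP => fe.
have := le_sum_incident (Q := spref (ends e).1 ^~ e) x_ge0 fa fe.
by rewrite -/(above x _ e) above0; lra.
Qed.

Lemma matching_of_bottom e f : e \in matching_of -> inc f (ends e).2 -> 0 < x f ->
  ~~ spref (ends e).2 e f.
Proof.
rewrite inE => /andP[xe_gt0 /eqP above0] fb xf_gt0; apply/negP => ef.
have := le_sum_incident (Q := spref (ends e).2 e) x_ge0 fb ef.
by rewrite -/(below x _ e) -above_end1_below_end2 // above0; lra.
Qed.

Lemma mem_matching_of e : 0 < x e ->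
  (forall f, inc f (ends e).1 -> 0 < x f -> ~~ spref (ends e).1 f e) \/
  (forall f, inc f (ends e).2 -> 0 < x f -> ~~ spref (ends e).2 e f) ->
  e \in matching_of.
Proof.
move=> xe_gt0 extremal; rewrite inE xe_gt0; apply/eqP.
case: extremal => [top | bottom]; last rewrite above_end1_below_end2 //.
  by apply: sum_support_eq0 => f fa fe /(top f fa); rewrite fe.
by apply: sum_support_eq0 => f fb ef /(bottom f fb); rewrite ef.
Qed.

Lemma matching_of_matching : matching ends matching_of.
Proof.
move=> v; apply/card_le1_eqP => e f /setIdP[Me ev] /setIdP[Mf fv].
have [xe_gt0 xf_gt0] := (matching_of_pos Me, matching_of_pos Mf).
have [V1v | nV1v] := boolP (inV1 v).
  have := matching_of_top Me; have := matching_of_top Mf.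
  rewrite (end1_of_inc ev V1v) (end1_of_inc fv V1v).
  move=> /(_ e ev xe_gt0) nef /(_ f fv xf_gt0) nfe.
  apply: (untied_ipref_eq (v := v)) => //.
  by have := pref_trichotomy fv ev; rewrite (negbTE nfe) (negbTE nef) orbF.
have := matching_of_bottom Me; have := matching_of_bottom Mf.
rewrite (end2_of_inc ev nV1v) (end2_of_inc fv nV1v).
move=> /(_ e ev xe_gt0) nfe /(_ f fv xf_gt0) nef.
apply: (untied_ipref_eq (v := v)) => //.
by have := pref_trichotomy fv ev; rewrite (negbTE nfe) (negbTE nef) orbF.
Qed.

Lemma matching_of_covers v f : inc f v -> 0 < x f ->
  exists2 e, e \in matching_of & inc e v.
Proof.
move=> fv xf_gt0; pose A := [set h | inc h v && (0 < x h)].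
have A0 : A != set0 by apply/set0Pn; exists f; rewrite inE fv.
have inA h : h \in A -> inc h v /\ 0 < x h by rewrite inE => /andP.
have irr : irreflexive (spref v) by move=> e; apply/negbTE/spref_irr.
have [V1v | nV1v] := boolP (inV1 v).
  have better_trans : {in A & &, forall a b c, spref v a b -> spref v b c -> spref v a c}.
    by move=> a b c /inA[av _] /inA[bv _] /inA[cv _]; apply: spref_trans.
  have [e /inA[ev xe_gt0] e_top] := exists_maximal better_trans irr A0.
  exists e => //; apply: mem_matching_of => //; left; rewrite (end1_of_inc ev V1v).
  by move=> g gv xg_gt0; apply: e_top; rewrite inE gv.
have worse_trans :
    {in A & &, forall a b c, spref v b a -> spref v c b -> spref v c a}.
  by move=> a b c /inA[av _] /inA[bv _] /inA[cv _] ba cb; apply: spref_trans cb ba.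
have [e /inA[ev xe_gt0] e_bottom] :=
  exists_maximal (r := fun a b => spref v b a) worse_trans (fun e => irr e) A0.
exists e => //; apply: mem_matching_of => //; right; rewrite (end2_of_inc ev nV1v).
by move=> g gv xg_gt0; apply: e_bottom; rewrite inE gv.
Qed.

Definition chi : E -> R := fun e => (e \in matching_of)%:R.

(* Capping by [1/2] keeps [delta < 1], so [x] is a proper convex combination
   of [chi] and [residual] below. *)
Definition delta := \big[Num.min/2^-1]_(e in matching_of) x e.

Lemma delta_gt0 : 0 < delta.
Proof. by apply: lt_bigmin => [|e /matching_of_pos]; rewrite ?invr_gt0. Qed.

Lemma delta_lt1 : delta < 1.
Proof. have : delta <= 2^-1 by apply: bigmin_le_id. by lra. Qed.

Lemma chi_le e : delta * chi e <= x e.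
Proof.
rewrite /chi; case: (boolP (e \in matching_of)) => Me; last by rewrite mulr0 x_ge0.
by rewrite mulr1; apply: bigmin_le_cond.
Qed.

Lemma chi01 e : chi e = 0 \/ chi e = 1.
Proof. by rewrite /chi; case: (e \in matching_of); [right | left]. Qed.

Lemma unmatched_zero v : mu_at ends matching_of v = None -> forall f, inc f v -> x f = 0.
Proof.
move=> v_free f fv; apply/eqP; rewrite eq_le x_ge0 andbT leNgt; apply/negP => xf_gt0.
have [e Me ev] := matching_of_covers fv xf_gt0.
by have := notin_unmatched v_free ev; rewrite Me.
Qed.

Lemma mass_x v : mass x v = if mu_at ends matching_of v is Some _ then 1 else 0.
Proof.
case t_at: (mu_at ends matching_of v) => [t|]; last first.
  by apply: big1 => f; apply: unmatched_zero.
by have [/matching_of_pos xt_gt0 tv] := mu_at_some t_at; apply: mass_pos tv xt_gt0.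
Qed.

Lemma mass_chi v : mass chi v = if mu_at ends matching_of v is Some _ then 1 else 0.
Proof.
rewrite /mass -(sum_indicator matching_of_matching v predT).
by apply: eq_bigl => f; rewrite andbT.
Qed.

Lemma end1_cases g : let a := (ends g).1 in
  [\/ [/\ delta <= above x a g, above chi a g = 1, tied chi a g = 0 & chi g = 0],
      [/\ above x a g = 0, delta <= tied x a g, above chi a g = 0,
          tied chi a g = 1 & chi g = 1 \/ x g = 0] |
      [/\ above x a g = 0, tied x a g = 0, above chi a g = 0, tied chi a g = 0
        & chi g = 0]].
Proof.
move=> a; have ga : inc g a := inc_end1 g.
rewrite !(above_indicator matching_of_matching, tied_indicator matching_of_matching).
case t_at: (mu_at ends matching_of a) => [t|]; last first.
  have x0 := unmatched_zero t_at.
  constructor 3; split => //; try by apply: big1 => f /andP[fa _]; apply: x0.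
  by rewrite /chi (negbTE (notin_unmatched t_at ga)).
have [Mt ta] := mu_at_some t_at; have xt_gt0 := matching_of_pos Mt.
have t_top : forall f, inc f a -> 0 < x f -> ~~ spref a f t.
  by have := matching_of_top Mt; rewrite (end1_of_inc ta (end1_inV1 g)).
have delta_le : delta <= x t by apply: bigmin_le_cond.
have chi_g : g != t -> chi g = 0.
  by move/(notin_other matching_of_matching t_at ga)/negbTE; rewrite /chi => ->.
have := pref_trichotomy ta ga; case/or3P => [tg | tg | gt].
- constructor 1; split.
  + exact: le_trans delta_le (le_sum_incident (Q := spref a ^~ g) x_ge0 ta tg).
  + by rewrite tg.
  + by rewrite ipref_sym (negbTE (spref_ipref tg)).
  + by apply: chi_g; apply: contraTneq tg => ->; rewrite spref_irr.
- constructor 2; split.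
  + apply: sum_support_eq0 => f fa fg xf_gt0.
    by have := t_top f fa xf_gt0; rewrite (spref_ipref_trans fa ga ta fg) // ipref_sym.
  + exact: le_trans delta_le (le_sum_incident (Q := ipref a ^~ g) x_ge0 ta tg).
  + by rewrite ipref_sprefF.
  + by rewrite tg.
  + have [xg0 | xg_gt0] := eqVneq (x g) 0; [by right | left].
    have xg_pos : 0 < x g by rewrite lt_def xg_gt0 x_ge0.
    by rewrite /chi -(untied_ipref_eq ga ta xg_pos xt_gt0 tg) Mt.
- constructor 3; split.
  + apply: sum_support_eq0 => f fa fg xf_gt0.
    by have := t_top f fa xf_gt0; rewrite (spref_trans fa ga ta fg gt).
  + apply: sum_support_eq0 => f fa fg xf_gt0.
    by have := t_top f fa xf_gt0; rewrite (ipref_spref_trans fa ga ta fg gt).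
  + by rewrite (negbTE (spref_asym gt)).
  + by rewrite (negbTE (spref_ipref gt)).
  + by apply: chi_g; apply: contraTneq gt => ->; rewrite spref_irr.
Qed.

Lemma end2_cases g : let b := (ends g).2 in
  [\/ [/\ above x b g = 1, above chi b g = 1, tied chi b g = 0 & chi g = 0],
      [/\ above x b g + tied x b g = 1, delta <= tied x b g, above chi b g = 0
        & tied chi b g = 1] |
      [/\ above x b g + tied x b g <= 1 - delta, above chi b g = 0,
          tied chi b g = 0 & chi g = 0]].
Proof.
move=> b; have gb : inc g b := inc_end2 g.
have below_ge0 : 0 <= below x b g by apply: sumr_ge0.
rewrite !(above_indicator matching_of_matching, tied_indicator matching_of_matching).
case t_at: (mu_at ends matching_of b) => [t|]; last first.
  have x0 := unmatched_zero t_at.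
  constructor 3; split => //; last by rewrite /chi (negbTE (notin_unmatched t_at gb)).
  rewrite /above /tied !big1 => [| f /andP[fb _] | f /andP[fb _]]; try exact: x0.
  by have := delta_lt1; lra.
have [Mt tb] := mu_at_some t_at; have xt_gt0 := matching_of_pos Mt.
have t_bottom : forall f, inc f b -> 0 < x f -> ~~ spref b t f.
  by have := matching_of_bottom Mt; rewrite (end2_of_inc tb (end2_notinV1 g)).
have delta_le : delta <= x t by apply: bigmin_le_cond.
have chi_g : g != t -> chi g = 0.
  by move/(notin_other matching_of_matching t_at gb)/negbTE; rewrite /chi => ->.
have split_b := mass_split x gb; rewrite (mass_pos tb xt_gt0) in split_b.
have := pref_trichotomy tb gb; case/or3P => [tg | tg | gt].
- have tied0 : tied x b g = 0.
    apply: sum_support_eq0 => f fb fg xf_gt0.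
    by have := t_bottom f fb xf_gt0; rewrite (spref_ipref_trans tb gb fb tg) // ipref_sym.
  have below0 : below x b g = 0.
    apply: sum_support_eq0 => f fb gf xf_gt0.
    by have := t_bottom f fb xf_gt0; rewrite (spref_trans tb gb fb tg gf).
  constructor 1; split; first by lra.
  + by rewrite tg.
  + by rewrite ipref_sym (negbTE (spref_ipref tg)).
  + by apply: chi_g; apply: contraTneq tg => ->; rewrite spref_irr.
- have below0 : below x b g = 0.
    apply: sum_support_eq0 => f fb gf xf_gt0.
    by have := t_bottom f fb xf_gt0; rewrite (ipref_spref_trans tb gb fb tg gf).
  constructor 2; split; first by lra.
  + exact: le_trans delta_le (le_sum_incident (Q := ipref b ^~ g) x_ge0 tb tg).
  + by rewrite ipref_sprefF.
  + by rewrite tg.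
- have := le_sum_incident (Q := spref b g) x_ge0 tb gt; rewrite -/(below x b g).
  move=> xt_le; constructor 3; split; first by lra.
  + by rewrite (negbTE (spref_asym gt)).
  + by rewrite (negbTE (spref_ipref gt)).
  + by apply: chi_g; apply: contraTneq gt => ->; rewrite spref_irr.
Qed.

Lemma chi_E1_bounds g : g \in E1 ->
  1 <= chi g + above_ends chi g /\
  1 - delta <= x g + above_ends x g - delta * (chi g + above_ends chi g).
Proof.
move=> E1g; have [_ _ cE1 _] := (inS_iff x).1 xS.
move: (cE1 g E1g) (x_ge0 g) (le_tied x_ge0 (inc_end1 g)) (le_tied x_ge0 (inc_end2 g)).
move: delta_gt0 (chi_le g) (chi01 g).
move: (end1_cases g) (end2_cases g); rewrite /above_ends /=.
(* Abstracting the [chi]-values lets [subst] make the products with [delta]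
   linear for [lra]. *)
move: (chi g) (above chi (ends g).1 g) (tied chi (ends g).1 g).
move: (above chi (ends g).2 g) (tied chi (ends g).2 g) => ucb tcb cg uca tca.
case=> [[? ? ? ?] | [? ? ? ? [?|?]] | [? ? ? ? ?]];
case=> [[? ? ? ?] | [? ? ? ?] | [? ? ? ?]] => ? ? [?|?] ? ? ? ?; subst; split; lra.
Qed.

Lemma chi_E2_bounds g v : g \notin E1 -> inc g v ->
  1 <= tied chi v g + above_ends chi g /\
  1 - delta <= tied x v g + above_ends x g - delta * (tied chi v g + above_ends chi g).
Proof.
move=> E2g gv; have [_ _ _ cE2] := (inS_iff x).1 xS.
move: (cE2 g v E2g gv) (x_ge0 g) (le_tied x_ge0 (inc_end1 g)).
move: (le_tied x_ge0 (inc_end2 g)) delta_gt0; case/orP: gv => /eqP <-.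
all: move: (end1_cases g) (end2_cases g); rewrite /above_ends /=.
all: move: (chi g) (above chi (ends g).1 g) (tied chi (ends g).1 g).
all: move: (above chi (ends g).2 g) (tied chi (ends g).2 g) => ucb tcb cg uca tca.
all: case=> [[? ? ? ?] | [? ? ? ? _] | [? ? ? ? ?]];
  case=> [[? ? ? ?] | [? ? ? ?] | [? ? ? ?]] => ? ? ? ? ?; subst; split; lra.
Qed.

Lemma chi_inS : inS chi.
Proof.
apply/inS_iff; split.
- by move=> e; rewrite /chi ler0n.
- by move=> v; rewrite mass_chi; case: (mu_at _ _ _).
- by move=> e /chi_E1_bounds[].
- by move=> e v E2e ev; case: (chi_E2_bounds E2e ev).
Qed.

Definition residual e := (x e - delta * chi e) / (1 - delta).

Lemma x_split e : x e = delta * chi e + (1 - delta) * residual e.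
Proof.
rewrite /residual [(1 - delta) * _]mulrC divfK ?lt0r_neq0 ?subr_gt0 ?delta_lt1 //; ring.
Qed.

Lemma residual_inS : inS residual.
Proof.
have d_lt1 : 0 < 1 - delta by rewrite subr_gt0 delta_lt1.
have ge1 c : 1 - delta <= c -> 1 <= c / (1 - delta).
  by move=> ?; rewrite ler_pdivlMr // mul1r.
have sum_residual (P : pred E) : \sum_(h | P h) residual h =
    (\sum_(h | P h) x h - delta * \sum_(h | P h) chi h) / (1 - delta).
  by rewrite /residual -mulr_suml sumrB mulr_sumr.
have combine a b c d : (a - delta * b) / (1 - delta) + (c - delta * d) / (1 - delta) =
    (a + c - delta * (b + d)) / (1 - delta).
  by rewrite -mulrDl; congr (_ / _); ring.
apply/inS_iff; split.
- by move=> e; apply: divr_ge0; [rewrite subr_ge0 chi_le | exact: ltW].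
- move=> v; rewrite /mass sum_residual -/(mass x v) -/(mass chi v) mass_x mass_chi.
  by case: (mu_at _ _ _); rewrite ?mulr1 ?divff ?mulr0 ?subrr ?mul0r ?gt_eqF.
- move=> e E1e; rewrite /above_ends /above !sum_residual /residual !combine.
  by apply: ge1; case: (chi_E1_bounds E1e).
- move=> e v E2e ev; rewrite /above_ends /above /tied !sum_residual /residual !combine.
  by apply: ge1; case: (chi_E2_bounds E2e ev).
Qed.

Lemma integral_of_extreme : extreme_point ends pref E1 x -> forall e, x e = chi e.
Proof.
case=> _ x_ext e; have [d_gt0 d_lt1] := (delta_gt0, delta_lt1).
have chi_res := x_ext _ _ delta chi_inS residual_inS _ x_split.
by rewrite x_split chi_res; [ring | apply/andP; split; lra].
Qed.

End Integrality.
End StablePolytope.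

Theorem lemma4p3 (R : realType) (V E : finType) (ends : E -> V * V)
  (inV1 : pred V) (E1 : {set E}) (pref : V -> rel E) :
  bipartite_simple ends inV1 ->
  pref_ok ends pref ->
  forall x : E -> R, extreme_point ends pref E1 x ->
  exists mu : {set E},
    nonuniformly_stable ends pref E1 mu /\
    (forall e, x e = (e \in mu)%:R).
Proof.
move=> bip pref_wf x x_ext; have xS := x_ext.1.
have x_untied := extreme_untied bip pref_wf x_ext.
exists (matching_of ends pref x); split.
  apply: (stable_of_indicator_inS bip (matching_of_matching bip pref_wf xS x_untied)).
  exact (chi_inS bip pref_wf xS x_untied).
exact (integral_of_extreme bip pref_wf xS x_untied x_ext).
Qed.
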